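(* For all $\alpha\in\left(0,\left(\frac{24}{25}\right)^{1/3}\right]$, $$\lambda_3(\alpha)\ge\sqrt{15}-\frac65\left(\frac{24}{25}\right)^{1/3}-\frac9{25}.$$
   Context: For $\alpha\in\mathbb R$, let $\mathfrak h_{\mathcal M}(\alpha)=-\frac{d^2}{dt^2}+\left(\frac12 t^2-\alpha\right)^2$ be the self-adjoint operator on $L^2(\mathbb R)$ with domain $\{u\in L^2(\mathbb R): -u''+(\frac12 t^2-\alpha)^2u\in L^2(\mathbb R)\}$, with simple positive eigenvalues $0<\lambda_1(\alpha)<\lambda_2(\alpha)<\lambda_3(\alpha)<\cdots\to+\infty$. *)

From Stdlib Require Import Reals List.
From Coquelicot Require Import Coquelicot.
Open Scope R_scope.

Definition potM (alpha t : R) : R := (t ^ 2 / 2 - alpha) ^ 2.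

Definition sq_integrable (u : R -> R) : Prop :=
  ex_RInt_gen (fun t => (u t) ^ 2) (Rbar_locally m_infty) (Rbar_locally p_infty).

Definition is_eigenfunction (alpha lam : R) (u : R -> R) : Prop :=
  sq_integrable u /\ (exists t, u t <> 0) /\
  forall t, ex_derive u t /\
    is_derive (Derive u) t (potM alpha t * u t - lam * u t).

Definition is_eigenvalue (alpha lam : R) : Prop :=
  exists u : R -> R, is_eigenfunction alpha lam u.

(* lam is the n-th eigenvalue lambda_n(alpha) (n >= 1), eigenvalues being
   listed in increasing order (they are simple): lam is an eigenvalue and
   exactly n-1 eigenvalues lie strictly below it. *)
Definition is_nth_eigenvalue (alpha : R) (n : nat) (lam : R) : Prop :=
  is_eigenvalue alpha lam /\
  exists l : list R, NoDup l /\ length l = (n - 1)%nat /\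
    forall mu, In mu l <-> (is_eigenvalue alpha mu /\ mu < lam).

(* Fix 0 <= alpha <= 1 and a bound state u with eigenvalue mu < 2.34.  For any w with
   w' + w^2 < potM - mu on [a, b], Picone's function u u' - w u^2 is strictly increasing
   on [a, b], its derivative being (u' - w u)^2 + (potM - mu - w' - w^2) u^2.  Taking
   w = - kappa tan (kappa (t - s)) with kappa^2 > 2.34 on |t - s| <= 9/10 rules out two
   zeros in (-9/10, 9/10); continuing w by explicit linear and constant pieces up to +oo,
   where Picone's function tends to 0, rules out zeros beyond 9/10, and by symmetry below
   -9/10.  So u has at most one zero.  By Sturm comparison (the Wronskian is monotone and
   vanishes at infinity) a bound state of larger energy has a zero on each side of any zero
   of a lower one, and some zero if the lower one has none.  Hence at most two eigenvalues
   lie below 2.34 > sqrt 15 - 6/5 (24/25)^(1/3) - 9/25. *)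

From Stdlib Require Import Reals List Lra Psatz Classical.
From Coquelicot Require Import Coquelicot.
Open Scope R_scope.

Lemma is_derive_replace (f : R -> R) (x l l' : R) :
  is_derive f x l -> l = l' -> is_derive f x l'.
Proof. now intros H <-. Qed.

Lemma is_derive_Rplus (f g : R -> R) (x df dg : R) :
  is_derive f x df -> is_derive g x dg -> is_derive (fun t => f t + g t) x (df + dg).
Proof. exact (is_derive_plus f g x df dg). Qed.

Lemma is_derive_Rminus (f g : R -> R) (x df dg : R) :
  is_derive f x df -> is_derive g x dg -> is_derive (fun t => f t - g t) x (df - dg).
Proof. exact (is_derive_minus f g x df dg). Qed.

Lemma is_derive_Rmult (f g : R -> R) (x df dg : R) :
  is_derive f x df -> is_derive g x dg ->
  is_derive (fun t => f t * g t) x (df * g x + f x * dg).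
Proof. intros Hf Hg. apply (is_derive_mult f g x df dg Hf Hg Rmult_comm). Qed.

Lemma is_derive_comp_Ropp (f : R -> R) (x l : R) :
  is_derive f (- x) l -> is_derive (fun t => f (- t)) x (- l).
Proof.
  intros Hf. eapply is_derive_replace.
  - apply (is_derive_comp f Ropp x l (-1) Hf).
    apply (is_derive_opp (fun t => t) x 1), (is_derive_id (K := R_AbsRing)).
  - simpl; unfold scal; simpl; unfold mult; simpl; ring.
Qed.

Lemma Rabs_lt_iff_sq (x e : R) : 0 < e -> (Rabs x < e <-> x * x < e * e).
Proof. intros He. unfold Rabs; destruct Rcase_abs; split; intro; nra. Qed.

Lemma is_derive_MVT (f df : R -> R) (a b : R) : a < b ->
  (forall t, a <= t <= b -> is_derive f t (df t)) ->
  exists c, a < c < b /\ f b - f a = df c * (b - a).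
Proof.
  intros Hab Hd. destruct (MVT_cor2 f df a b Hab) as [c [Hc Hin]].
  - intros c Hc. apply is_derive_Reals, Hd, Hc.
  - now exists c.
Qed.

Lemma derive_nonneg_le (f df : R -> R) (a b : R) : a <= b ->
  (forall t, a <= t <= b -> is_derive f t (df t)) ->
  (forall t, a < t < b -> 0 <= df t) -> f a <= f b.
Proof.
  intros Hab Hd Hpos. destruct (Req_dec a b) as [<-|Hne]; [lra|].
  destruct (is_derive_MVT f df a b ltac:(lra) Hd) as [c [Hc Heq]].
  specialize (Hpos c Hc). nra.
Qed.

Lemma derive_nonpos_le (f df : R -> R) (a b : R) : a <= b ->
  (forall t, a <= t <= b -> is_derive f t (df t)) ->
  (forall t, a < t < b -> df t <= 0) -> f b <= f a.
Proof.
  intros Hab Hd Hneg. destruct (Req_dec a b) as [<-|Hne]; [lra|].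
  destruct (is_derive_MVT f df a b ltac:(lra) Hd) as [c [Hc Heq]].
  specialize (Hneg c Hc). nra.
Qed.

Lemma derive_neg_lt (f df : R -> R) (a b : R) : a < b ->
  (forall t, a <= t <= b -> is_derive f t (df t)) ->
  (forall t, a < t < b -> df t < 0) -> f b < f a.
Proof.
  intros Hab Hd Hneg. destruct (is_derive_MVT f df a b Hab Hd) as [c [Hc Heq]].
  specialize (Hneg c Hc). nra.
Qed.

Lemma is_derive_locally_const (f : R -> R) (a b c t l : R) :
  (forall s, a < s < b -> f s = c) -> a < t < b -> is_derive f t l -> l = 0.
Proof.
  intros Hc Ht Hd.
  assert (Hloc : locally t (fun s => f s = c)).
  { assert (Hr : 0 < Rmin (t - a) (b - t)) by (apply Rmin_pos; lra).
    exists (mkposreal _ Hr); intros s Hs.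
    change (Rabs (s - t) < Rmin (t - a) (b - t)) in Hs.
    apply Rabs_lt_between in Hs.
    pose proof (Rmin_l (t - a) (b - t)); pose proof (Rmin_r (t - a) (b - t)).
    apply Hc; lra. }
  rewrite <- (is_derive_unique _ _ _ (is_derive_ext_loc f (fun _ => c) t l Hloc Hd)).
  apply is_derive_unique, (is_derive_const (K := R_AbsRing) (V := R_NormedModule)).
Qed.

Lemma nonneg_of_pos_right (f : R -> R) (z q : R) : continuity_pt f z -> z < q ->
  (forall x, z < x < q -> 0 < f x) -> 0 <= f z.
Proof.
  intros Hc Hzq Hpos. apply Rnot_lt_le; intro Hneg.
  destruct (proj1 (continuity_pt_locally f z) Hc (mkposreal (- f z) ltac:(lra))) as [d Hd].
  pose proof (cond_pos d).
  set (x := z + Rmin d (q - z) / 2).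
  assert (Hmin : 0 < Rmin d (q - z) <= d /\ Rmin d (q - z) <= q - z).
  { split; [split; [apply Rmin_pos; lra|apply Rmin_l]|apply Rmin_r]. }
  assert (Hx : Rabs (f x - f z) < - f z).
  { apply (Hd x). change (Rabs (x - z) < d).
    rewrite Rabs_pos_eq; unfold x; lra. }
  apply Rabs_lt_between in Hx. specialize (Hpos x ltac:(unfold x; lra)). lra.
Qed.

Lemma derive_nonneg_of_pos_right (f : R -> R) (z q l : R) : is_derive f z l -> f z = 0 ->
  z < q -> (forall x, z < x < q -> 0 < f x) -> 0 <= l.
Proof.
  intros Hd H0 Hzq Hpos. apply Rnot_lt_le; intro Hneg.
  destruct (proj1 (is_derive_Reals f z l) Hd (- l / 2) ltac:(lra)) as [d Hdl].
  pose proof (cond_pos d).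
  set (h := Rmin d (q - z) / 2).
  assert (Hmin : 0 < Rmin d (q - z) <= d /\ Rmin d (q - z) <= q - z).
  { split; [split; [apply Rmin_pos; lra|apply Rmin_l]|apply Rmin_r]. }
  specialize (Hdl h ltac:(unfold h; lra) ltac:(rewrite Rabs_pos_eq; unfold h; lra)).
  rewrite H0, Rminus_0_r in Hdl. apply Rabs_lt_between in Hdl.
  assert (0 < f (z + h) / h) by (apply Rdiv_lt_0_compat; [apply Hpos|]; unfold h; lra).
  lra.
Qed.

Lemma sign_of_nonvanishing (f : R -> R) (I : R -> Prop) (x0 : R) : continuity f ->
  (forall x y c, I x -> I y -> x <= c <= y -> I c) -> I x0 ->
  (forall x, I x -> f x <> 0) -> exists c, c <> 0 /\ forall x, I x -> 0 < c * f x.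
Proof.
  intros Hc Hconv Hx0 Hnz. exists (f x0). split; [now apply Hnz|].
  intros x Hx. apply Rnot_le_lt; intro Hle.
  destruct (Rle_or_lt x0 x) as [Hord|Hord].
  - destruct (IVT_cor f x0 x Hc Hord Hle) as [c [Hcx Hfc]].
    apply (Hnz c); [apply (Hconv x0 x c)|]; auto.
  - destruct (IVT_cor f x x0 Hc (Rlt_le _ _ Hord) ltac:(lra)) as [c [Hcx Hfc]].
    apply (Hnz c); [apply (Hconv x x0 c)|]; auto.
Qed.

(** * The Montgomery equation *)

Definition is_solution (al mu : R) (u u' : R -> R) : Prop :=
  (forall t, is_derive u t (u' t)) /\
  (forall t, is_derive u' t ((potM al t - mu) * u t)).

Lemma potM_opp (al t : R) : potM al (- t) = potM al t.
Proof. unfold potM. field. Qed.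

Lemma potM_nonneg (al t : R) : 0 <= potM al t.
Proof. apply pow2_ge_0. Qed.

Lemma potM_le (al t M : R) : Rabs t <= M -> potM al t <= (M * M / 2 + Rabs al) ^ 2.
Proof.
  intros Ht. unfold potM.
  assert (Htt : t * t <= M * M).
  { pose proof (Rabs_pos t). rewrite <- (Rabs_pos_eq (t * t)) by nra.
    rewrite Rabs_mult. nra. }
  pose proof (Rabs_pos al). pose proof (Rle_abs al). pose proof (Rle_abs (- al)).
  rewrite Rabs_Ropp in *. simpl. nra.
Qed.

Lemma potM_ge_far (al mu t : R) : 2 + Rabs al + Rabs mu <= t -> mu <= potM al t.
Proof.
  intros Ht. unfold potM.
  pose proof (Rabs_pos al). pose proof (Rle_abs al).
  pose proof (Rabs_pos mu). pose proof (Rle_abs mu).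
  assert (Hx : 2 + Rabs mu <= t ^ 2 / 2 - al) by (simpl; nra).
  simpl. nra.
Qed.

Lemma is_solution_scal (al mu c : R) (u u' : R -> R) : is_solution al mu u u' ->
  is_solution al mu (fun t => c * u t) (fun t => c * u' t).
Proof.
  intros [Hu Hu']. split; intro t.
  - apply is_derive_scal, Hu.
  - eapply is_derive_replace; [apply is_derive_scal, Hu'|ring].
Qed.

Lemma is_solution_reflect (al mu : R) (u u' : R -> R) : is_solution al mu u u' ->
  is_solution al mu (fun t => u (- t)) (fun t => - u' (- t)).
Proof.
  intros [Hu Hu']. split; intro t.
  - apply is_derive_comp_Ropp, Hu.
  - eapply is_derive_replace.
    + apply (is_derive_opp (fun t => u' (- t))), is_derive_comp_Ropp, Hu'.
    + rewrite potM_opp. simpl; unfold opp; simpl. ring.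
Qed.

Lemma solution_continuity (al mu : R) (u u' : R -> R) :
  is_solution al mu u u' -> continuity u.
Proof.
  intros [Hu _] t. apply derivable_continuous_pt.
  exists (u' t). apply is_derive_Reals, Hu.
Qed.

Lemma Rmult_2_le_Rabs (a b c : R) : 2 * a * b * c <= Rabs c * (a * a + b * b).
Proof.
  destruct (Rle_or_lt 0 c).
  - rewrite Rabs_pos_eq by lra. pose proof (pow2_ge_0 (a - b)). nra.
  - rewrite Rabs_left by lra. pose proof (pow2_ge_0 (a + b)). nra.
Qed.

(* Gronwall: the energy [(u^2 + u'^2) e^(-K s)] is nonincreasing. *)
Lemma solution_zero_right (al mu : R) (u u' : R -> R) (t0 t : R) :
  is_solution al mu u u' -> u t0 = 0 -> u' t0 = 0 -> t0 <= t -> u t = 0.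
Proof.
  intros [Hu Hu'] H0 H0' Ht.
  set (K := 1 + Rabs mu + ((Rabs t0 + Rabs t) * (Rabs t0 + Rabs t) / 2 + Rabs al) ^ 2).
  set (E := fun s => (u s * u s + u' s * u' s) * exp (- K * s)).
  set (dE := fun s => (2 * u s * u' s * (1 + potM al s - mu)
                       - K * (u s * u s + u' s * u' s)) * exp (- K * s)).
  assert (HdE : forall s, is_derive E s (dE s)).
  { intro s. unfold E, dE. eapply is_derive_replace.
    - apply is_derive_Rmult; [apply is_derive_Rplus; apply is_derive_Rmult; auto|].
      auto_derive; [exact I|reflexivity].
    - cbv beta. ring. }
  assert (Hcoef : forall s, t0 <= s <= t -> Rabs (1 + potM al s - mu) <= K).
  { intros s Hs.
    assert (Hs' : Rabs s <= Rabs t0 + Rabs t) by (unfold Rabs; repeat destruct Rcase_abs; lra).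
    pose proof (potM_le al s _ Hs'). pose proof (potM_nonneg al s).
    pose proof (Rle_abs mu). pose proof (Rle_abs (- mu)). rewrite Rabs_Ropp in *.
    unfold K. apply Rabs_le. lra. }
  assert (Hdec : E t <= E t0).
  { apply (derive_nonpos_le E dE t0 t Ht); [intros; apply HdE|].
    intros s Hs. unfold dE.
    pose proof (Rmult_2_le_Rabs (u s) (u' s) (1 + potM al s - mu)).
    pose proof (Hcoef s ltac:(lra)). pose proof (exp_pos (- K * s)).
    assert (0 <= u s * u s + u' s * u' s) by nra.
    apply Rmult_le_0_r; nra. }
  unfold E in Hdec. rewrite H0, H0' in Hdec.
  pose proof (exp_pos (- K * t)).
  assert (Hsq : u t * u t + u' t * u' t <= 0) by nra.
  nra.
Qed.

Lemma solution_zero (al mu : R) (u u' : R -> R) (t0 : R) :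
  is_solution al mu u u' -> u t0 = 0 -> u' t0 = 0 -> forall t, u t = 0.
Proof.
  intros Hs H0 H0' t. destruct (Rle_or_lt t0 t).
  - now apply (solution_zero_right al mu u u' t0 t).
  - rewrite <- (Ropp_involutive t).
    apply (solution_zero_right al mu _ _ (- t0) (- t) (is_solution_reflect al mu u u' Hs));
      rewrite ?Ropp_involutive, ?H0, ?H0'; lra.
Qed.

(** * Decay of bound states *)

Section DecayBeyondTurningPoint.

Variables (al mu T : R) (u u' : R -> R).
Hypothesis Hsol : is_solution al mu u u'.
Hypothesis Hpot : forall t, T <= t -> mu <= potM al t.
Hypothesis Hsmall : forall t0 d, 0 < d -> exists t, t0 <= t /\ u t * u t < d.

Lemma mul_deriv_nondecreasing (a b : R) : T <= a -> a <= b -> u a * u' a <= u b * u' b.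
Proof.
  intros Ha Hab. destruct Hsol as [Hu Hu'].
  apply (derive_nonneg_le (fun t => u t * u' t)
           (fun t => u' t * u' t + u t * ((potM al t - mu) * u t)) a b Hab).
  - intros t _. eapply is_derive_replace; [apply is_derive_Rmult; auto|ring].
  - intros t Ht. pose proof (Hpot t ltac:(lra)). nra.
Qed.

Lemma mul_deriv_nonpos (t : R) : T <= t -> u t * u' t <= 0.
Proof.
  intros Ht. apply Rnot_lt_le; intro Hg. set (g := u t * u' t) in Hg.
  destruct Hsol as [Hu _].
  assert (Hgrow : forall s, t <= s -> u t * u t + 2 * g * (s - t) <= u s * u s).
  { intros s Hs.
    enough (u t * u t - 2 * g * t <= u s * u s - 2 * g * s) by lra.
    apply (derive_nonneg_le (fun r => u r * u r - 2 * g * r)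
             (fun r => 2 * (u r * u' r) - 2 * g) t s Hs).
    - intros r _. eapply is_derive_replace.
      + apply is_derive_Rminus; [apply is_derive_Rmult; apply Hu|].
        apply is_derive_scal, (is_derive_id (K := R_AbsRing)).
      + unfold one; simpl. ring.
    - intros r Hr. pose proof (mul_deriv_nondecreasing t r Ht ltac:(lra)). unfold g. lra. }
  destruct (Hsmall (t + 1) g Hg) as [s [Hs Hus]].
  pose proof (Hgrow s ltac:(lra)). nra.
Qed.

Lemma sq_nonincreasing (a b : R) : T <= a -> a <= b -> u b * u b <= u a * u a.
Proof.
  intros Ha Hab. destruct Hsol as [Hu _].
  apply (derive_nonpos_le (fun t => u t * u t) (fun t => 2 * (u t * u' t)) a b Hab).
  - intros t _. eapply is_derive_replace; [apply is_derive_Rmult; apply Hu|ring].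
  - intros t Ht. pose proof (mul_deriv_nonpos t ltac:(lra)). lra.
Qed.

Lemma deriv_sq_nonincreasing (a b : R) : T <= a -> a <= b -> u' b * u' b <= u' a * u' a.
Proof.
  intros Ha Hab. destruct Hsol as [_ Hu'].
  apply (derive_nonpos_le (fun t => u' t * u' t)
           (fun t => 2 * (potM al t - mu) * (u t * u' t)) a b Hab).
  - intros t _. eapply is_derive_replace; [apply is_derive_Rmult; apply Hu'|ring].
  - intros t Ht. pose proof (mul_deriv_nonpos t ltac:(lra)). pose proof (Hpot t ltac:(lra)).
    nra.
Qed.

Lemma solution_small_right (e : R) : 0 < e ->
  exists T', forall t, T' <= t -> Rabs (u t) < e /\ Rabs (u' t) < e.
Proof.
  intros He.
  destruct (Hsmall T (e / 2 * (e / 2)) ltac:(nra)) as [T1 [HT1 Hu1]].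
  assert (Hu : forall t, T1 <= t -> Rabs (u t) < e / 2).
  { intros t Ht. apply Rabs_lt_iff_sq; [lra|]. pose proof (sq_nonincreasing T1 t HT1 Ht). lra. }
  destruct (is_derive_MVT u u' T1 (T1 + 1) ltac:(lra)) as [c [Hc Hmvt]].
  { intros t _. apply (proj1 Hsol). }
  assert (Hu'c : Rabs (u' c) < e).
  { replace (u' c) with (u (T1 + 1) - u T1) by (rewrite Hmvt; ring).
    eapply Rle_lt_trans; [apply Rabs_triang|]. rewrite Rabs_Ropp.
    pose proof (Hu (T1 + 1) ltac:(lra)). pose proof (Hu T1 ltac:(lra)). lra. }
  exists (T1 + 1). intros t Ht. split; [pose proof (Hu t ltac:(lra)); lra|].
  apply Rabs_lt_iff_sq in Hu'c; [|lra]. apply Rabs_lt_iff_sq; [lra|].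
  pose proof (deriv_sq_nonincreasing c t ltac:(lra) ltac:(lra)). lra.
Qed.

End DecayBeyondTurningPoint.

Definition decays (f : R -> R) : Prop :=
  forall e, 0 < e -> exists T, forall t, T <= Rabs t -> Rabs (f t) < e.

Lemma decays_scal (c : R) (f : R -> R) : decays f -> decays (fun t => c * f t).
Proof.
  intros Hf e He.
  destruct (Hf (e / (Rabs c + 1))) as [T HT].
  { pose proof (Rabs_pos c). apply Rdiv_lt_0_compat; lra. }
  exists T. intros t Ht. specialize (HT t Ht). rewrite Rabs_mult.
  pose proof (Rabs_pos c). pose proof (Rabs_pos (f t)).
  assert (Rabs (f t) * (Rabs c + 1) < e).
  { apply (Rmult_lt_compat_r (Rabs c + 1)) in HT; [|lra].
    now replace (e / (Rabs c + 1) * (Rabs c + 1)) with e in HT by (field; lra). }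
  nra.
Qed.

Lemma decays_reflect (f : R -> R) : decays f -> decays (fun t => f (- t)).
Proof.
  intros Hf e He. destruct (Hf e He) as [T HT].
  exists T. intros t Ht. apply HT. now rewrite Rabs_Ropp.
Qed.

Lemma decays_mult (f g : R -> R) : decays f -> decays g -> decays (fun t => f t * g t).
Proof.
  intros Hf Hg e He.
  destruct (Hf (Rmin 1 e)) as [T1 H1]; [apply Rmin_pos; lra|].
  destruct (Hg (Rmin 1 e)) as [T2 H2]; [apply Rmin_pos; lra|].
  exists (Rmax T1 T2). intros t Ht.
  pose proof (Rmax_l T1 T2). pose proof (Rmax_r T1 T2).
  pose proof (Rmin_l 1 e). pose proof (Rmin_r 1 e).
  specialize (H1 t ltac:(lra)). specialize (H2 t ltac:(lra)).
  rewrite Rabs_mult. pose proof (Rabs_pos (f t)). pose proof (Rabs_pos (g t)). nra.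
Qed.

Lemma decays_minus (f g : R -> R) : decays f -> decays g -> decays (fun t => f t - g t).
Proof.
  intros Hf Hg e He.
  destruct (Hf (e / 2)) as [T1 H1]; [lra|]. destruct (Hg (e / 2)) as [T2 H2]; [lra|].
  exists (Rmax T1 T2). intros t Ht.
  pose proof (Rmax_l T1 T2). pose proof (Rmax_r T1 T2).
  specialize (H1 t ltac:(lra)). specialize (H2 t ltac:(lra)).
  eapply Rle_lt_trans; [apply Rabs_triang|]. rewrite Rabs_Ropp. lra.
Qed.

Definition bound_state (al mu : R) (u u' : R -> R) : Prop :=
  is_solution al mu u u' /\ decays u /\ decays u' /\ exists t, u t <> 0.

Lemma bound_state_scal (al mu c : R) (u u' : R -> R) : c <> 0 -> bound_state al mu u u' ->
  bound_state al mu (fun t => c * u t) (fun t => c * u' t).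
Proof.
  intros Hc [Hs [Hu [Hu' [t Ht]]]]. split; [now apply is_solution_scal|].
  split; [now apply decays_scal|]. split; [now apply decays_scal|].
  exists t. now apply Rmult_integral_contrapositive.
Qed.

Lemma bound_state_reflect (al mu : R) (u u' : R -> R) : bound_state al mu u u' ->
  bound_state al mu (fun t => u (- t)) (fun t => - u' (- t)).
Proof.
  intros [Hs [Hu [Hu' [t Ht]]]]. split; [now apply is_solution_reflect|].
  split; [now apply decays_reflect|].
  split.
  { intros e He. destruct (Hu' e He) as [T HT]. exists T. intros s Hs'.
    rewrite Rabs_Ropp. apply HT. now rewrite Rabs_Ropp. }
  exists (- t). now rewrite Ropp_involutive.
Qed.

Lemma solution_decays (al mu : R) (u u' : R -> R) : is_solution al mu u u' ->
  (forall t0 d, 0 < d -> exists t, t0 <= t /\ u t * u t < d) ->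
  (forall t0 d, 0 < d -> exists t, t <= t0 /\ u t * u t < d) ->
  decays u /\ decays u'.
Proof.
  intros Hs Hright Hleft.
  set (T := 2 + Rabs al + Rabs mu).
  assert (Hpot : forall t, T <= t -> mu <= potM al t) by (intros; now apply potM_ge_far).
  assert (Hsmall : forall e, 0 < e -> exists T', forall t, T' <= Rabs t ->
                     Rabs (u t) < e /\ Rabs (u' t) < e).
  { intros e He.
    destruct (solution_small_right al mu T u u' Hs Hpot Hright e He) as [T1 H1].
    destruct (solution_small_right al mu T _ _ (is_solution_reflect al mu u u' Hs) Hpot)
      with (e := e) as [T2 H2]; auto.
    { intros t0 d Hd. destruct (Hleft (- t0) d Hd) as [t [Ht Hut]].
      exists (- t). rewrite Ropp_involutive. split; [lra|auto]. }
    exists (Rmax T1 T2). intros t Ht.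
    pose proof (Rmax_l T1 T2). pose proof (Rmax_r T1 T2).
    destruct (Rle_or_lt 0 t).
    - rewrite Rabs_pos_eq in Ht by lra. apply H1. lra.
    - rewrite Rabs_left in Ht by lra. destruct (H2 (- t) ltac:(lra)) as [Hu Hu'].
      rewrite Ropp_involutive, Rabs_Ropp in *. auto. }
  split; intros e He; destruct (Hsmall e He) as [T' HT'];
    exists T'; intros t Ht; apply HT', Ht.
Qed.

Lemma sq_integrable_RInt_bounded (u : R -> R) : sq_integrable u ->
  exists l, forall p q, p <= q ->
    ex_RInt (fun t => u t ^ 2) p q /\ RInt (fun t => u t ^ 2) p q <= l.
Proof.
  intros [l0 Hl0]. set (f := fun t => u t ^ 2).
  destruct (Hl0 _ (locally_ball l0 (mkposreal 1 Rlt_0_1))) as [Q S [M HQ] [M' HS] HP].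
  exists (Rabs l0 + 1). intros p q Hpq.
  set (a := Rmin (M - 1) p). set (b := Rmax (M' + 1) q).
  pose proof (Rmin_l (M - 1) p). pose proof (Rmin_r (M - 1) p).
  pose proof (Rmax_l (M' + 1) q). pose proof (Rmax_r (M' + 1) q).
  destruct (HP a b (HQ a ltac:(unfold a; lra)) (HS b ltac:(unfold b; lra))) as [y [Hy Hly]].
  change (is_RInt f a b y) in Hy. change (Rabs (y - l0) < 1) in Hly.
  assert (Hab : ex_RInt f a b) by (exists y; exact Hy).
  assert (Haq : ex_RInt f a q) by (apply (ex_RInt_Chasles_1 f a q b); [unfold a, b; lra|auto]).
  assert (Hqb : ex_RInt f q b) by (apply (ex_RInt_Chasles_2 f a q b); [unfold a, b; lra|auto]).
  assert (Hap : ex_RInt f a p) by (apply (ex_RInt_Chasles_1 f a p q); [unfold a; lra|auto]).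
  assert (Hpq' : ex_RInt f p q) by (apply (ex_RInt_Chasles_2 f a p q); [unfold a; lra|auto]).
  split; [exact Hpq'|].
  assert (Hsum : RInt f a p + RInt f p q + RInt f q b = y).
  { rewrite <- (is_RInt_unique f a b y Hy), <- (RInt_Chasles f a q b Haq Hqb),
      <- (RInt_Chasles f a p q Hap Hpq'). reflexivity. }
  assert (0 <= RInt f a p) by (apply RInt_ge_0; [unfold a; lra|auto|intros; apply pow2_ge_0]).
  assert (0 <= RInt f q b) by (apply RInt_ge_0; [unfold b; lra|auto|intros; apply pow2_ge_0]).
  apply Rabs_lt_between in Hly. pose proof (Rle_abs l0). fold f. lra.
Qed.

Lemma sq_integrable_small (u : R -> R) (d : R) : sq_integrable u -> 0 < d ->
  exists L, forall p, exists t, p <= t <= p + L /\ u t * u t < d.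
Proof.
  intros Hsq Hd. destruct (sq_integrable_RInt_bounded u Hsq) as [l Hl].
  set (L := (Rabs l + 1) / d).
  assert (HL : 0 < L) by (unfold L; pose proof (Rabs_pos l); apply Rdiv_lt_0_compat; lra).
  exists L. intro p. apply NNPP; intro Hno.
  assert (Hge : forall t, p <= t <= p + L -> d <= u t ^ 2).
  { intros t Ht. apply Rnot_lt_le; intro Hlt. apply Hno. exists t.
    split; [exact Ht|]. simpl in Hlt; lra. }
  destruct (Hl p (p + L) ltac:(lra)) as [Hex Hle].
  assert (HI : RInt (fun _ => d) p (p + L) <= RInt (fun t => u t ^ 2) p (p + L)).
  { apply RInt_le; [lra|apply ex_RInt_const|exact Hex|intros; apply Hge; lra]. }
  rewrite RInt_const in HI. change (scal (p + L - p) d) with ((p + L - p) * d) in HI.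
  assert ((p + L - p) * d = Rabs l + 1) by (unfold L; field; lra).
  pose proof (Rle_abs l). lra.
Qed.

Lemma eigenfunction_bound_state (al mu : R) (u : R -> R) :
  is_eigenfunction al mu u -> bound_state al mu u (Derive u).
Proof.
  intros [Hsq [Hnz Hd]].
  assert (Hs : is_solution al mu u (Derive u)).
  { split; intro t; [apply Derive_correct, (proj1 (Hd t))|].
    eapply is_derive_replace; [apply (proj2 (Hd t))|ring]. }
  destruct (solution_decays al mu u (Derive u) Hs) as [Hu Hu'].
  - intros t0 d Hdd. destruct (sq_integrable_small u d Hsq Hdd) as [L HL].
    destruct (HL t0) as [t [Ht Hut]]. exists t. split; [lra|exact Hut].
  - intros t0 d Hdd. destruct (sq_integrable_small u d Hsq Hdd) as [L HL].
    destruct (HL (t0 - L)) as [t [Ht Hut]]. exists t. split; [lra|exact Hut].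
  - exact (conj Hs (conj Hu (conj Hu' Hnz))).
Qed.

(** * Picone's identity *)

Definition picone (w u u' : R -> R) (t : R) : R := u t * u' t - w t * (u t * u t).

Definition riccati_subsolution (al mu : R) (w w' : R -> R) (a b : R) : Prop :=
  forall t, a <= t <= b -> is_derive w t (w' t) /\ mu < potM al t - w' t - w t ^ 2.

Lemma riccati_subsolution_sub (al mu : R) (w w' : R -> R) (a b a' b' : R) :
  a <= a' -> b' <= b -> riccati_subsolution al mu w w' a b -> riccati_subsolution al mu w w' a' b'.
Proof. intros Ha Hb Hw t Ht. apply Hw. lra. Qed.

Lemma const_subsolution (al mu c a b : R) :
  (forall t, a <= t <= b -> mu < potM al t - c ^ 2) ->
  riccati_subsolution al mu (fun _ => c) (fun _ => 0) a b.
Proof.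
  intros Hpot t Ht. split; [apply (is_derive_const (K := R_AbsRing) (V := R_NormedModule))|].
  specialize (Hpot t Ht). lra.
Qed.

Lemma picone_derive (al mu : R) (u u' w : R -> R) (t dw : R) : is_solution al mu u u' ->
  is_derive w t dw ->
  is_derive (picone w u u') t
    ((u' t - w t * u t) ^ 2 + (potM al t - mu - dw - w t ^ 2) * (u t * u t)).
Proof.
  intros [Hu Hu'] Hw. unfold picone. eapply is_derive_replace.
  - apply is_derive_Rminus; [apply is_derive_Rmult; auto|].
    apply is_derive_Rmult; [exact Hw|apply is_derive_Rmult; auto].
  - simpl. ring.
Qed.

Lemma picone_nondecreasing (al mu : R) (u u' w w' : R -> R) (a b : R) :
  is_solution al mu u u' -> riccati_subsolution al mu w w' a b -> a <= b ->
  picone w u u' a <= picone w u u' b.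
Proof.
  intros Hs Hw Hab.
  apply (derive_nonneg_le _ (fun t => (u' t - w t * u t) ^ 2
                                      + (potM al t - mu - w' t - w t ^ 2) * (u t * u t)) a b Hab).
  - intros t Ht. apply picone_derive; [exact Hs|apply Hw, Ht].
  - intros t Ht. destruct (Hw t ltac:(lra)) as [_ Hgap].
    pose proof (pow2_ge_0 (u' t - w t * u t)). assert (0 <= u t * u t) by nra. nra.
Qed.

(* If [picone] were constant on [a, b], its derivative would vanish at the midpoint,
   forcing [u = u' = 0] there. *)
Lemma picone_increasing (al mu : R) (u u' w w' : R -> R) (a b : R) :
  is_solution al mu u u' -> (exists t, u t <> 0) -> riccati_subsolution al mu w w' a b ->
  a < b -> picone w u u' a < picone w u u' b.
Proof.
  intros Hs [t0 Ht0] Hw Hab. apply Rnot_le_lt; intro Hle.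
  set (m := (a + b) / 2).
  assert (Hconst : forall s, a < s < b -> picone w u u' s = picone w u u' a).
  { intros s Hs'.
    pose proof (picone_nondecreasing al mu u u' w w' a s Hs
                  (riccati_subsolution_sub al mu w w' a b a s ltac:(lra) ltac:(lra) Hw) ltac:(lra)).
    pose proof (picone_nondecreasing al mu u u' w w' s b Hs
                  (riccati_subsolution_sub al mu w w' a b s b ltac:(lra) ltac:(lra) Hw) ltac:(lra)).
    lra. }
  destruct (Hw m ltac:(unfold m; lra)) as [Hdw Hgap].
  pose proof (is_derive_locally_const _ a b _ m _ Hconst ltac:(unfold m; lra)
                (picone_derive al mu u u' w m (w' m) Hs Hdw)) as H0.
  set (g := potM al m - mu - w' m - w m ^ 2) in H0.
  pose proof (pow2_ge_0 (u' m - w m * u m)).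
  assert (Hsq : g * (u m * u m) = 0).
  { apply Rle_antisym; [lra|]. apply Rmult_le_pos; [unfold g; lra|nra]. }
  assert (Hum : u m = 0).
  { apply Rmult_integral in Hsq as [Hg0|Hsq]; [unfold g in Hg0; lra|].
    now apply Rmult_integral in Hsq as [|]. }
  rewrite Hum in H0.
  assert (Hu'm : u' m = 0).
  { assert (Hd : u' m * u' m = 0) by (simpl in H0; nra).
    now apply Rmult_integral in Hd as [|]. }
  apply Ht0. exact (solution_zero al mu u u' m Hs Hum Hu'm t0).
Qed.

Lemma picone_nonpos_tail (al mu c a : R) (u u' : R -> R) :
  is_solution al mu u u' -> decays u -> decays u' ->
  (forall t, a <= t -> mu < potM al t - c ^ 2) ->
  forall t, a <= t -> picone (fun _ => c) u u' t <= 0.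
Proof.
  intros Hs Hu Hu' Hpot t Ht. apply Rnot_lt_le; intro Hpos.
  assert (Hdec : decays (picone (fun _ => c) u u')).
  { apply decays_minus; [|apply decays_scal]; apply decays_mult; assumption. }
  destruct (Hdec _ Hpos) as [T HT].
  pose proof (Rmax_l T (t + 1)). pose proof (Rmax_r T (t + 1)).
  set (s := Rmax T (t + 1)) in *. pose proof (Rle_abs s).
  specialize (HT s ltac:(lra)). pose proof (Rle_abs (picone (fun _ => c) u u' s)).
  enough (picone (fun _ => c) u u' t <= picone (fun _ => c) u u' s) by lra.
  apply (picone_nondecreasing al mu u u' _ (fun _ => 0) t s Hs); [|lra].
  apply const_subsolution. intros r Hr. apply Hpot. lra.
Qed.

Lemma picone_nonpos_step (al mu : R) (u u' v w w' : R -> R) (a b : R) :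
  is_solution al mu u u' -> riccati_subsolution al mu w w' a b -> a <= b -> v a = w a ->
  picone w u u' b <= 0 -> picone v u u' a <= 0.
Proof.
  intros Hs Hw Hab Hva Hb. unfold picone at 1. rewrite Hva.
  change (picone w u u' a <= 0).
  pose proof (picone_nondecreasing al mu u u' w w' a b Hs Hw Hab). lra.
Qed.

Lemma picone_nonpos_no_zero (al mu : R) (u u' w w' : R -> R) (a b : R) :
  is_solution al mu u u' -> (exists t, u t <> 0) -> riccati_subsolution al mu w w' a b ->
  a < b -> picone w u u' b <= 0 -> u a <> 0.
Proof.
  intros Hs Hnz Hw Hab Hb Ha.
  pose proof (picone_increasing al mu u u' w w' a b Hs Hnz Hw Hab) as Hlt.
  unfold picone at 1 in Hlt. rewrite Ha in Hlt. lra.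
Qed.

(** * Zeros of bound states below 2.34 *)

Definition kappa : R := 153 / 100.

Definition w_tan (s t : R) : R := - kappa * (sin (kappa * (t - s)) / cos (kappa * (t - s))).

Definition w_tan' (s t : R) : R := - kappa ^ 2 / cos (kappa * (t - s)) ^ 2.

(* [w_tan s] solves [w' + w^2 = - kappa^2] where defined. *)
Lemma w_tan_subsolution (al mu s a b : R) : mu < kappa ^ 2 ->
  s - 9 / 10 <= a -> b <= s + 9 / 10 -> riccati_subsolution al mu (w_tan s) (w_tan' s) a b.
Proof.
  intros Hmu Ha Hb t Ht.
  assert (Hcos : 0 < cos (kappa * (t - s))).
  { pose proof PI2_3_2. apply cos_gt_0; unfold kappa; lra. }
  pose proof (sin2_cos2 (kappa * (t - s))) as Hpyth. unfold Rsqr in Hpyth.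
  unfold w_tan, w_tan'. split.
  - auto_derive; replace (t + - s) with (t - s) by ring; [lra|].
    set (c := cos (kappa * (t - s))) in *. set (sn := sin (kappa * (t - s))) in *.
    field_simplify_eq; [|lra]. nra.
  - pose proof (potM_nonneg al t).
    set (c := cos (kappa * (t - s))) in *. set (sn := sin (kappa * (t - s))) in *.
    replace (potM al t - - kappa ^ 2 / c ^ 2 - (- kappa * (sn / c)) ^ 2)
      with (potM al t + kappa ^ 2 * ((1 - sn * sn) / c ^ 2)) by (field; lra).
    replace ((1 - sn * sn) / c ^ 2) with 1 by (field_simplify_eq; lra).
    lra.
Qed.

Lemma kappa_sq_gt : 234 / 100 < kappa ^ 2.
Proof. unfold kappa. lra. Qed.

Lemma potM_lower_bound (al a t : R) : 0 <= al <= 1 -> 3 / 2 <= a <= t ->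
  (a * a / 2 - 1) ^ 2 <= potM al t.
Proof.
  intros Hal Hat. unfold potM.
  assert (0 <= a * a / 2 - 1 <= t ^ 2 / 2 - al) by (simpl; nra).
  apply pow_incr. lra.
Qed.

Definition w_lin1 (t : R) : R := - (9 / 4) * (t - 9 / 5).

Definition w_lin2 (t : R) : R := - (27 / 20) - 7 / 4 * (t - 12 / 5).

Lemma w_lin1_subsolution (al mu : R) : 0 <= al <= 1 -> mu < 234 / 100 ->
  riccati_subsolution al mu w_lin1 (fun _ => - (9 / 4)) (9 / 5) (12 / 5).
Proof.
  intros Hal Hmu t Ht. unfold w_lin1. split; [auto_derive; [exact I|ring]|].
  destruct (Rle_or_lt t 2); [|destruct (Rle_or_lt t (11 / 5))].
  - pose proof (potM_lower_bound al (9 / 5) t Hal ltac:(lra)). nra.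
  - pose proof (potM_lower_bound al 2 t Hal ltac:(lra)). nra.
  - pose proof (potM_lower_bound al (11 / 5) t Hal ltac:(lra)). nra.
Qed.

Lemma w_lin2_subsolution (al mu : R) : 0 <= al <= 1 -> mu < 234 / 100 ->
  riccati_subsolution al mu w_lin2 (fun _ => - (7 / 4)) (12 / 5) (13 / 5).
Proof.
  intros Hal Hmu t Ht. unfold w_lin2. split; [auto_derive; [exact I|ring]|].
  pose proof (potM_lower_bound al (12 / 5) t Hal ltac:(lra)). nra.
Qed.

Lemma tail_subsolution (al mu a b : R) : 0 <= al <= 1 -> mu < 234 / 100 -> 13 / 5 <= a ->
  riccati_subsolution al mu (fun _ => - (17 / 10)) (fun _ => 0) a b.
Proof.
  intros Hal Hmu Ha. apply const_subsolution. intros t Ht.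
  pose proof (potM_lower_bound al (13 / 5) t Hal ltac:(lra)). lra.
Qed.

(* The subsolutions [w_tan (9/5)], [w_lin1], [w_lin2] and [-17/10] glue continuously at
   [9/5], [12/5] and [13/5], so [picone_nonpos_step] propagates the sign leftwards. *)
Lemma picone_nonpos_right_pieces (al mu : R) (u u' : R -> R) : 0 <= al <= 1 -> mu < 234 / 100 ->
  is_solution al mu u u' -> decays u -> decays u' ->
  picone (w_tan (9 / 5)) u u' (9 / 5) <= 0 /\ picone w_lin1 u u' (12 / 5) <= 0 /\
  picone w_lin2 u u' (13 / 5) <= 0 /\
  forall t, 13 / 5 <= t -> picone (fun _ => - (17 / 10)) u u' t <= 0.
Proof.
  intros Hal Hmu Hs Hu Hu'.
  assert (Htail : forall t, 13 / 5 <= t -> picone (fun _ => - (17 / 10)) u u' t <= 0).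
  { apply (picone_nonpos_tail al mu _ _ u u' Hs Hu Hu'). intros t Ht.
    destruct (tail_subsolution al mu t t Hal Hmu Ht t) as [_ Hgap]; lra. }
  assert (H2 : picone w_lin2 u u' (13 / 5) <= 0).
  { apply (picone_nonpos_step al mu u u' w_lin2 _ _ (13 / 5) (13 / 5) Hs
             (tail_subsolution al mu _ _ Hal Hmu (Rle_refl _)));
      [lra|unfold w_lin2; lra|apply Htail; lra]. }
  assert (H1 : picone w_lin1 u u' (12 / 5) <= 0).
  { apply (picone_nonpos_step al mu u u' _ _ _ (12 / 5) (13 / 5) Hs
             (w_lin2_subsolution al mu Hal Hmu)); [lra|unfold w_lin1, w_lin2; lra|exact H2]. }
  split; [|split; [exact H1|split; [exact H2|exact Htail]]].
  apply (picone_nonpos_step al mu u u' _ _ _ (9 / 5) (12 / 5) Hs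
           (w_lin1_subsolution al mu Hal Hmu)); [lra| |exact H1].
  unfold w_tan, w_lin1. replace (9 / 5 - 9 / 5) with 0 by ring.
  rewrite Rmult_0_r, sin_0, cos_0. lra.
Qed.

Lemma bound_state_zero_lt (al mu b0 : R) (u u' : R -> R) : 0 <= al <= 1 -> mu < 234 / 100 ->
  bound_state al mu u u' -> u b0 = 0 -> b0 < 9 / 10.
Proof.
  intros Hal Hmu [Hs [Hu [Hu' Hnz]]] Hb0. apply Rnot_le_lt; intro Hb.
  destruct (picone_nonpos_right_pieces al mu u u' Hal Hmu Hs Hu Hu') as [P0 [P1 [P2 Ptail]]].
  destruct (Rlt_or_le b0 (9 / 5)); [|destruct (Rlt_or_le b0 (12 / 5));
                                     [|destruct (Rlt_or_le b0 (13 / 5))]].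
  - apply (picone_nonpos_no_zero al mu u u' _ _ b0 (9 / 5) Hs Hnz
             (w_tan_subsolution al mu (9 / 5) b0 (9 / 5) ltac:(pose proof kappa_sq_gt; lra)
                ltac:(lra) ltac:(lra))); auto.
  - apply (picone_nonpos_no_zero al mu u u' _ _ b0 (12 / 5) Hs Hnz
             (riccati_subsolution_sub al mu _ _ (9 / 5) (12 / 5) b0 (12 / 5) ltac:(lra) (Rle_refl _)
                (w_lin1_subsolution al mu Hal Hmu))); auto.
  - apply (picone_nonpos_no_zero al mu u u' _ _ b0 (13 / 5) Hs Hnz
             (riccati_subsolution_sub al mu _ _ (12 / 5) (13 / 5) b0 (13 / 5) ltac:(lra)
                (Rle_refl _)
                (w_lin2_subsolution al mu Hal Hmu))); auto.
  - apply (picone_nonpos_no_zero al mu u u' _ _ b0 (b0 + 1) Hs Hnz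
             (tail_subsolution al mu b0 (b0 + 1) Hal Hmu ltac:(lra))); [lra|apply Ptail; lra|auto].
Qed.

Lemma bound_state_zero_bounds (al mu z : R) (u u' : R -> R) : 0 <= al <= 1 -> mu < 234 / 100 ->
  bound_state al mu u u' -> u z = 0 -> - (9 / 10) < z < 9 / 10.
Proof.
  intros Hal Hmu Hb Hz. split.
  - enough (- z < 9 / 10) by lra.
    apply (bound_state_zero_lt al mu (- z) _ _ Hal Hmu (bound_state_reflect al mu u u' Hb)).
    now rewrite Ropp_involutive.
  - exact (bound_state_zero_lt al mu z u u' Hal Hmu Hb Hz).
Qed.

Lemma bound_state_zero_unique (al mu a b : R) (u u' : R -> R) : 0 <= al <= 1 ->
  mu < 234 / 100 -> bound_state al mu u u' -> u a = 0 -> u b = 0 -> a = b.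
Proof.
  intros Hal Hmu Hb Ha Hb'.
  assert (Hlt : forall x y, u x = 0 -> u y = 0 -> x < y -> False).
  { intros x y Hx Hy Hxy.
    pose proof (bound_state_zero_bounds al mu x u u' Hal Hmu Hb Hx).
    pose proof (bound_state_zero_bounds al mu y u u' Hal Hmu Hb Hy).
    destruct Hb as [Hs [_ [_ Hnz]]].
    apply (picone_nonpos_no_zero al mu u u' (w_tan 0) (w_tan' 0) x y Hs Hnz); auto.
    - apply w_tan_subsolution; [pose proof kappa_sq_gt|..]; lra.
    - unfold picone. rewrite Hy. lra. }
  destruct (Rtotal_order a b) as [H|[H|H]]; [|exact H|]; exfalso;
    [apply (Hlt a b)|apply (Hlt b a)]; auto.
Qed.

(** * Sturm comparison *)

Definition wronskian (u u' v v' : R -> R) (t : R) : R := u t * v' t - u' t * v t.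

Lemma wronskian_derive (al mi mj : R) (u u' v v' : R -> R) (t : R) :
  is_solution al mi u u' -> is_solution al mj v v' ->
  is_derive (wronskian u u' v v') t ((mi - mj) * (u t * v t)).
Proof.
  intros [Hu Hu'] [Hv Hv']. unfold wronskian. eapply is_derive_replace.
  - apply is_derive_Rminus; apply is_derive_Rmult; auto.
  - ring.
Qed.

Lemma wronskian_decays (u u' v v' : R -> R) : decays u -> decays u' -> decays v -> decays v' ->
  decays (wronskian u u' v v').
Proof. intros Hu Hu' Hv Hv'. apply decays_minus; apply decays_mult; assumption. Qed.

(* [W' = (mi - mj) u v < 0] while [W] tends to [0] at [+oo]. *)
Lemma wronskian_pos_right (al mi mj a : R) (u u' v v' : R -> R) :
  bound_state al mi u u' -> bound_state al mj v v' -> mi < mj ->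
  (forall x, a < x -> 0 < u x /\ 0 < v x) -> forall t, a <= t -> 0 < wronskian u u' v v' t.
Proof.
  intros Hu Hv Hm Hpos.
  assert (Hdecr : forall s r, a <= s -> s < r -> wronskian u u' v v' r < wronskian u u' v v' s).
  { intros s r Hs Hsr.
    apply (derive_neg_lt _ (fun t => (mi - mj) * (u t * v t)) s r Hsr).
    - intros t _. apply (wronskian_derive al); [apply Hu|apply Hv].
    - intros t Ht. destruct (Hpos t ltac:(lra)). assert (0 < u t * v t) by nra. nra. }
  intros t Ht. apply Rnot_le_lt; intro Hle.
  pose proof (Hdecr t (t + 1) Ht ltac:(lra)).
  destruct Hu as [_ [Hu [Hu' _]]], Hv as [_ [Hv [Hv' _]]].
  destruct (wronskian_decays u u' v v' Hu Hu' Hv Hv' (- wronskian u u' v v' (t + 1)))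
    as [T HT]; [lra|].
  pose proof (Rmax_l T (t + 2)). pose proof (Rmax_r T (t + 2)).
  set (s := Rmax T (t + 2)) in *. pose proof (Rle_abs s).
  specialize (HT s ltac:(lra)). apply Rabs_lt_between in HT.
  pose proof (Hdecr (t + 1) s ltac:(lra) ltac:(lra)). lra.
Qed.

Lemma sturm_no_positive_pair_right (al mi mj z : R) (u u' v v' : R -> R) :
  bound_state al mi u u' -> bound_state al mj v v' -> mi < mj -> u z = 0 ->
  (forall x, z < x -> 0 < u x /\ 0 < v x) -> False.
Proof.
  intros Hu Hv Hm Hz Hpos.
  pose proof (wronskian_pos_right al mi mj z u u' v v' Hu Hv Hm Hpos z (Rle_refl z)) as HW.
  assert (Hu'z : 0 <= u' z).
  { apply (derive_nonneg_of_pos_right u z (z + 1)); [apply Hu|exact Hz|lra|].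
    intros x Hx. apply Hpos. lra. }
  assert (Hvz : 0 <= v z).
  { apply (nonneg_of_pos_right v z (z + 1)); [apply (solution_continuity al mj v v'), Hv|lra|].
    intros x Hx. apply Hpos. lra. }
  unfold wronskian in HW. rewrite Hz in HW. nra.
Qed.

Lemma sturm_no_positive_pair (al mi mj : R) (u u' v v' : R -> R) :
  bound_state al mi u u' -> bound_state al mj v v' -> mi < mj ->
  (forall x, 0 < u x /\ 0 < v x) -> False.
Proof.
  intros Hu Hv Hm Hpos.
  pose proof (wronskian_pos_right al mi mj 0 u u' v v' Hu Hv Hm (fun x _ => Hpos x) 0 (Rle_refl 0)).
  pose proof (wronskian_pos_right al mi mj 0 _ _ _ _ (bound_state_reflect al mi u u' Hu)
                (bound_state_reflect al mj v v' Hv) Hm (fun x _ => Hpos (- x)) 0 (Rle_refl 0)).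
  unfold wronskian in *. rewrite Ropp_0 in *. lra.
Qed.

Lemma bound_state_sign (al mu x0 : R) (u u' : R -> R) (I : R -> Prop) :
  bound_state al mu u u' -> (forall x y c, I x -> I y -> x <= c <= y -> I c) -> I x0 ->
  (forall x, I x -> u x <> 0) ->
  exists c, c <> 0 /\ bound_state al mu (fun t => c * u t) (fun t => c * u' t) /\
    forall x, I x -> 0 < c * u x.
Proof.
  intros Hb Hconv Hx0 Hnz.
  destruct (sign_of_nonvanishing u I x0 (solution_continuity al mu u u' (proj1 Hb)) Hconv Hx0 Hnz)
    as [c [Hc Hpos]].
  exists c. split; [exact Hc|]. split; [now apply bound_state_scal|exact Hpos].
Qed.

Lemma sturm_zero_right (al mi mj z : R) (u u' v v' : R -> R) :
  bound_state al mi u u' -> bound_state al mj v v' -> mi < mj -> u z = 0 ->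
  (forall x, z < x -> u x <> 0) -> exists x, z < x /\ v x = 0.
Proof.
  intros Hu Hv Hm Hz Hnz. apply NNPP; intro Hno.
  assert (Hconv : forall x y c, z < x -> z < y -> x <= c <= y -> z < c) by (intros; lra).
  destruct (bound_state_sign al mi (z + 1) u u' (fun x => z < x) Hu Hconv ltac:(lra) Hnz)
    as [cu [_ [Hcu Hpu]]].
  destruct (bound_state_sign al mj (z + 1) v v' (fun x => z < x) Hv Hconv ltac:(lra))
    as [cv [_ [Hcv Hpv]]].
  { intros x Hx Hvx. apply Hno. now exists x. }
  apply (sturm_no_positive_pair_right al mi mj z _ _ _ _ Hcu Hcv Hm); [rewrite Hz; ring|].
  intros x Hx. split; [apply Hpu|apply Hpv]; exact Hx.
Qed.

Lemma sturm_zero_left (al mi mj z : R) (u u' v v' : R -> R) :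
  bound_state al mi u u' -> bound_state al mj v v' -> mi < mj -> u z = 0 ->
  (forall x, x < z -> u x <> 0) -> exists x, x < z /\ v x = 0.
Proof.
  intros Hu Hv Hm Hz Hnz.
  destruct (sturm_zero_right al mi mj (- z) _ _ _ _ (bound_state_reflect al mi u u' Hu)
              (bound_state_reflect al mj v v' Hv) Hm) as [x [Hx Hvx]].
  - now rewrite Ropp_involutive.
  - intros x Hx. apply Hnz. lra.
  - exists (- x). split; [lra|exact Hvx].
Qed.

Lemma sturm_zero (al mi mj : R) (u u' v v' : R -> R) :
  bound_state al mi u u' -> bound_state al mj v v' -> mi < mj ->
  (forall x, u x <> 0) -> exists x, v x = 0.
Proof.
  intros Hu Hv Hm Hnz. apply NNPP; intro Hno.
  assert (Hconv : forall x y c : R, True -> True -> x <= c <= y -> True) by auto.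
  destruct (bound_state_sign al mi 0 u u' (fun _ => True) Hu Hconv I (fun x _ => Hnz x))
    as [cu [_ [Hcu Hpu]]].
  destruct (bound_state_sign al mj 0 v v' (fun _ => True) Hv Hconv I)
    as [cv [_ [Hcv Hpv]]].
  { intros x _ Hvx. apply Hno. now exists x. }
  apply (sturm_no_positive_pair al mi mj _ _ _ _ Hcu Hcv Hm).
  intros x. split; [apply Hpu|apply Hpv]; exact I.
Qed.

(* A zero of [u] is unique, so [v] has a zero on each side of it, i.e. two zeros. *)
Lemma no_zero_below_bound_state (al mi mj z : R) (u u' v v' : R -> R) : 0 <= al <= 1 ->
  bound_state al mi u u' -> bound_state al mj v v' -> mi < mj -> mj < 234 / 100 ->
  u z = 0 -> False.
Proof.
  intros Hal Hu Hv Hm Hmj Hz.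
  assert (Hnz : forall x, x <> z -> u x <> 0).
  { intros x Hx Hux. apply Hx.
    exact (bound_state_zero_unique al mi x z u u' Hal ltac:(lra) Hu Hux Hz). }
  destruct (sturm_zero_right al mi mj z u u' v v' Hu Hv Hm Hz) as [x [Hx Hvx]].
  { intros x Hx. apply Hnz. lra. }
  destruct (sturm_zero_left al mi mj z u u' v v' Hu Hv Hm Hz) as [y [Hy Hvy]].
  { intros y Hy. apply Hnz. lra. }
  pose proof (bound_state_zero_unique al mj x y v v' Hal Hmj Hv Hvx Hvy). lra.
Qed.

Lemma no_three_bound_states_below (al m1 m2 m3 : R) (u1 u1' u2 u2' u3 u3' : R -> R) :
  0 <= al <= 1 -> bound_state al m1 u1 u1' -> bound_state al m2 u2 u2' ->
  bound_state al m3 u3 u3' -> m1 < m2 -> m2 < m3 -> m3 < 234 / 100 -> False.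
Proof.
  intros Hal H1 H2 H3 H12 H23 H3b.
  destruct (classic (exists z, u1 z = 0)) as [[z Hz]|Hno].
  - exact (no_zero_below_bound_state al m1 m2 z u1 u1' u2 u2' Hal H1 H2 H12 ltac:(lra) Hz).
  - destruct (sturm_zero al m1 m2 u1 u1' u2 u2' H1 H2 H12) as [z Hz].
    { intros x Hx. apply Hno. now exists x. }
    exact (no_zero_below_bound_state al m2 m3 z u2 u2' u3 u3' Hal H2 H3 H23 H3b Hz).
Qed.

Lemma cbrt_24_25_bounds : 9775 / 10000 <= Rpower (24 / 25) (1 / 3) <= 1.
Proof.
  set (a := Rpower (24 / 25) (1 / 3)).
  assert (Hpos : 0 < a) by apply exp_pos.
  assert (Hcube : a ^ 3 = 24 / 25).
  { rewrite <- Rpower_pow by exact Hpos. unfold a. rewrite Rpower_mult.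
    replace (1 / 3 * INR 3) with 1 by (simpl; field). apply Rpower_1. lra. }
  simpl in Hcube. split; apply Rnot_lt_le; intro; nra.
Qed.

Lemma sqrt_15_le : sqrt 15 <= 3873 / 1000.
Proof. rewrite <- (sqrt_square (3873 / 1000)) by lra. apply sqrt_le_1_alt. lra. Qed.

Theorem lemma5p5 (alpha lam3 : R) :
  0 < alpha -> alpha <= Rpower (24 / 25) (1 / 3) ->
  is_nth_eigenvalue alpha 3 lam3 ->
  lam3 >= sqrt 15 - 6 / 5 * Rpower (24 / 25) (1 / 3) - 9 / 25.
Proof.
  intros Hal Hale [[u Hu] [l [Hnd [Hlen Hin]]]].
  pose proof cbrt_24_25_bounds. pose proof sqrt_15_le.
  apply Rnot_lt_ge; intro Hlt.
  destruct l as [|x [|y [|]]]; try discriminate Hlen.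
  assert (Hxy : x <> y) by (intros ->; apply NoDup_cons_iff in Hnd; apply Hnd; now left).
  destruct (proj1 (Hin x) (or_introl eq_refl)) as [[ux Hux] Hx].
  destruct (proj1 (Hin y) (or_intror (or_introl eq_refl))) as [[uy Huy] Hy].
  apply eigenfunction_bound_state in Hu, Hux, Huy.
  destruct (Rtotal_order x y) as [Ho|[Ho|Ho]]; [|contradiction|].
  - apply (no_three_bound_states_below alpha x y lam3 _ _ _ _ _ _ ltac:(lra) Hux Huy Hu); lra.
  - apply (no_three_bound_states_below alpha y x lam3 _ _ _ _ _ _ ltac:(lra) Huy Hux Hu); lra.
Qed.
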